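(* Let $G$ be a marked ribbon graph (with exactly one marked vertex) decorated with arrows and edge weights $\mathbf b=(b_e)$, let $F\subseteq E(G)$, and let $G^F$ be the partial dual of $G$ with respect to $F$. Then \[R_G(1,\mathbf b,c)=\Big(\prod_{e\in F}b_e\Big)\,R_{G^F}(1,\mathbf b',c),\qquad b'_e=\begin{cases}b_e & e\notin F,\\ 1/b_e & e\in F.\end{cases}\]
   Context: A ribbon graph $G=(V(G),E(G))$ is a surface with boundary that is a union of discs, the vertices $V(G)$ and the edges $E(G)$, such that vertices and edges intersect in disjoint line segments, each segment lies on exactly one vertex and one edge, and each edge contains exactly two such segments (its attaching arcs). A marked ribbon graph is a ribbon graph in which some vertices carry a single marking, a point on the vertex boundary away from the attaching arcs, together with an orientation of that vertex boundary. Arrows may lie anywhere on the boundaries of vertices and edges (including on attaching arcs), each pointing in one of the two directions along the boundary. Partial duality: for an edge $e$, $G^{\{e\}}$ is obtained by removing the two attaching arcs of $e$, declaring the two remaining (previously free) boundary arcs of $e$ to be new vertex arcs, and attaching a new edge disc along new attaching arcs parallel to the removed ones; arrows and markings are kept in place, those lying on removed attaching arcs being placed on the corresponding new edge arcs. For $F\subseteq E(G)$, $G^F$ is obtained by doing this for every $e\in F$. Edges of $G^F$ are identified with those of $G$. For a spanning subgraph $F\subseteq E(G)$, $k(F)$ is its number of connected components and $\mathrm{bc}(F)$ its number of boundary components. Exactly one boundary component passes through the marking; the others form $\partial^c(F)$. Arrows on a boundary component are reduced by cancelling two consecutive arrows pointing in the same direction; a circular component then has $2j$ alternating arrows and contributes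 $K_j$; the marked component, read from the marking along the given orientation, has $2j$ alternating arrows and contributes $\Lambda_j$ if the first arrow points along the orientation and $\Lambda_j'$ otherwise; $K_0=\Lambda_0=\Lambda_0'=1$. The arrow Bollobás–Riordan polynomial is \[R_G(a,\mathbf b,c)=\sum_{F\subseteq E(G)} a^{k(F)}\Big(\prod_{e\in F}b_e\Big)c^{\mathrm{bc}(F)}\Big(\prod_{f\in\partial^c(F)}K_{j(f)}\Big)\Lambda^{(\prime)}_{j(F)}.\] *)

(* Combinatorial (graph-encoded map / "flag") model of
   arrow-decorated marked ribbon graphs. *)
From mathcomp Require Import all_boot all_order all_algebra.
Set Implicit Arguments. Unset Strict Implicit. Unset Printing Implicit Defensive.
Import GRing.Theory.

(* Points D are the corners of edges (4 per edge: the endpoints of its two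
   attaching arcs) plus possibly extra points on vertex boundaries (needed
   e.g. for vertices without edges).  Boundary arcs of vertices and edges are
   the pairs {x, s x} for the three involutions:
     alp : attaching arcs of edges (for non-edge points: a vertex arc),
     bet : side (free) arcs of edges,
     gam : free arcs of vertices.
   arrA x / arrB x / arrG x = arrows on the arc {x, alp x} / {x, bet x} /
   {x, gam x}, read while traversing from x to the other end; true = the
   arrow points along the traversal.
   The marking lies on the vertex arc {mk, gam mk}, after the first [mkpos]
   arrows read from mk; the vertex orientation at the marking is the
   direction mk -> gam mk. *)
Record ribbon (E D : finType) := Ribbon {
  ed : D -> option E;
  alp : D -> D;
  bet : D -> D;
  gam : D -> D;
  arrA : D -> seq bool;
  arrB : D -> seq bool;
  arrG : D -> seq bool;
  mk : D;
  mkpos : nat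
}.

Definition rev_arrows (s : seq bool) := rev (map negb s).

Definition wf_ribbon (E D : finType) (G : ribbon E D) : Prop :=
  involutive (alp G) /\ involutive (bet G) /\ involutive (gam G) /\
  (forall x, alp G x != x) /\ (forall x, gam G x != x) /\
  (forall x, ed G (alp G x) = ed G x /\ ed G (bet G x) = ed G x) /\
  (forall x, ed G x <> None ->
      [/\ bet G x != x, bet G x != alp G x & alp G (bet G x) = bet G (alp G x)]) /\
  (forall x, ed G x = None -> bet G x = alp G x) /\
  (forall e x y, ed G x = Some e -> ed G y = Some e ->
      y \in [:: x; alp G x; bet G x; alp G (bet G x)]) /\
  (forall e, exists x, ed G x = Some e) /\
  (forall x, [/\ arrA G (alp G x) = rev_arrows (arrA G x),
                 arrB G (bet G x) = rev_arrows (arrB G x) &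
                 arrG G (gam G x) = rev_arrows (arrG G x)]) /\
  (mkpos G <= size (arrG G (mk G)))%N.

Section Defs.
Variables (E D : finType).
Implicit Types (G : ribbon E D) (A F : {set E}).

Definition inS A G (x : D) : bool :=
  if ed G x is Some e then e \in A else false.

Definition pdual G F : ribbon E D :=
  Ribbon (ed G)
    (fun x => if inS F G x then bet G x else alp G x)
    (fun x => if inS F G x then alp G x else bet G x)
    (gam G)
    (fun x => if inS F G x then arrB G x else arrA G x)
    (fun x => if inS F G x then arrA G x else arrB G x)
    (arrG G) (mk G) (mkpos G).

(* Spanning subgraph A: the non-vertex boundary arc at a corner x is the side
   arc if the edge of x is in A, and the attaching arc otherwise. *)
Definition sigA G A x := if inS A G x then bet G x else alp G x.
Definition arcw G A x := if inS A G x then arrB G x else arrA G x.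

Definition conn G A : rel D :=
  fun x y => (y == alp G x) || (y == gam G x) || (inS A G x && (y == bet G x)).
Definition kcomp G A : nat := n_comp (conn G A) D.

Definition bnd G A : rel D := fun x y => (y == gam G x) || (y == sigA G A x).
Definition bcomp G A : nat := n_comp (bnd G A) D.

Definition pi G A x := sigA G A (gam G x).
Definition step G A x := arrG G x ++ arcw G A (gam G x).
Definition cycword G A x : seq bool := flatten (map (step G A) (orbit (pi G A) x)).
Definition markword G A : seq bool :=
  drop (mkpos G) (arrG G (mk G)) ++ arcw G A (gam G (mk G)) ++
  flatten (map (step G A) (behead (orbit (pi G A) (mk G)))) ++
  take (mkpos G) (arrG G (mk G)).

(* reduction of arrows: cancel two consecutive arrows with the same direction *)
Definition fred (s : seq bool) : seq bool :=
  foldr (fun b acc => if acc is c :: t then (if b == c then t else b :: acc)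
                      else [:: b]) [::] s.
Fixpoint cred_aux (n : nat) (s : seq bool) : seq bool :=
  if n is n'.+1 then
    (if s is b :: c :: t then
       (if b == last c t then cred_aux n' (belast c t) else s)
     else s)
  else s.
Definition cred (s : seq bool) := cred_aux (size s) (fred s).
Definition jcyc (s : seq bool) : nat := (size (cred s))./2.
Definition jlin (s : seq bool) : nat := (size (fred s))./2.

Variable K : fieldType.

Definition Lterm (Lv Lv' : nat -> K) (s : seq bool) : K :=
  if fred s is true :: _ then Lv (jlin s) else Lv' (jlin s).

Definition Rpoly G (a c : K) (b : E -> K) (Kv Lv Lv' : nat -> K) : K :=
  \sum_(A : {set E})
     (a ^+ kcomp G A * (\prod_(e in A) b e) * c ^+ bcomp G A *
      (\prod_(x : D | (x \in roots (bnd G A)) && ~~ connect (bnd G A) (mk G) x)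
          Kv (jcyc (cycword G A x))) *
      Lterm Lv Lv' (markword G A))%R.

End Defs.

(* A spanning subgraph A of G and the spanning subgraph A Δ F of G^F are the
   same surface: at a corner of an edge of F, partial duality exchanges the
   attaching arcs with the side arcs, and so does toggling membership of that
   edge.  Hence A and A Δ F have the same boundary components carrying the
   same arrows, and with a = 1 the only difference between the two summands
   is the edge weight, which b' corrects by the factor prod_(e in F) b_e. *)
From Stdlib Require Import FunctionalExtensionality.
From Pilot Require Import Defs.
From mathcomp Require Import all_boot all_order all_algebra.
Import GRing.Theory.
Set Implicit Arguments.
Unset Strict Implicit.
Unset Printing Implicit Defensive.
Local Open Scope ring_scope.

Section SymmetricDifference.
Variable T : finType.
Implicit Types A B : {set T}.

Definition symdiff A B : {set T} := (A :\: B) :|: (B :\: A).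

Lemma in_symdiff A B x : (x \in symdiff A B) = (x \in A) (+) (x \in B).
Proof. by rewrite !inE; case: (x \in A); case: (x \in B). Qed.

Lemma symdiffK B : involutive (symdiff^~ B).
Proof. by move=> A; apply/setP=> x; rewrite !in_symdiff addbK. Qed.

Lemma prod_symdiff_inv (K : fieldType) (w : T -> K) A B :
  {in B, forall x, w x != 0} ->
  \prod_(x in A) w x =
  \prod_(x in B) w x * \prod_(x in symdiff A B) (if x \in B then (w x)^-1 else w x).
Proof.
move=> wB_neq0; rewrite big_mkcond [X in _ = X * _]big_mkcond.
rewrite [X in _ = _ * X]big_mkcond -big_split.
apply: eq_bigr => x _; rewrite in_symdiff.
case: (x \in A); case xB: (x \in B); rewrite /= ?mulr1 ?mul1r //.
by rewrite divff ?wB_neq0.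
Qed.

End SymmetricDifference.

Section PartialDualBoundary.
Variables (E D : finType) (G : ribbon E D) (F : {set E}).
Implicit Type A : {set E}.

Lemma inS_pdual A : inS A (pdual G F) = inS A G.
Proof. by []. Qed.

Lemma inS_symdiff A x : inS (symdiff A F) G x = inS A G x (+) inS F G x.
Proof. by rewrite /inS; case: (ed G x) => [e|] //; rewrite in_symdiff. Qed.

Lemma sigA_pdual A : sigA (pdual G F) (symdiff A F) = sigA G A.
Proof.
apply: functional_extensionality => x; rewrite /sigA /= inS_pdual inS_symdiff.
by case: (inS A G x); case: (inS F G x).
Qed.

Lemma arcw_pdual A : arcw (pdual G F) (symdiff A F) = arcw G A.
Proof.
apply: functional_extensionality => x; rewrite /arcw /= inS_pdual inS_symdiff.
by case: (inS A G x); case: (inS F G x).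
Qed.

Lemma bnd_pdual A : bnd (pdual G F) (symdiff A F) = bnd G A.
Proof. by rewrite /bnd sigA_pdual. Qed.

Lemma bcomp_pdual A : bcomp (pdual G F) (symdiff A F) = bcomp G A.
Proof. by rewrite /bcomp bnd_pdual. Qed.

Lemma pi_pdual A : Defs.pi (pdual G F) (symdiff A F) = Defs.pi G A.
Proof. by rewrite /Defs.pi sigA_pdual. Qed.

Lemma step_pdual A : step (pdual G F) (symdiff A F) = step G A.
Proof. by rewrite /step arcw_pdual. Qed.

Lemma cycword_pdual A : cycword (pdual G F) (symdiff A F) = cycword G A.
Proof. by rewrite /cycword pi_pdual step_pdual. Qed.

Lemma markword_pdual A : markword (pdual G F) (symdiff A F) = markword G A.
Proof. by rewrite /markword pi_pdual step_pdual arcw_pdual. Qed.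

End PartialDualBoundary.

Theorem mainTheorem8 (E D : finType) (G : ribbon E D) (F : {set E})
  (K : fieldType) (b : E -> K) (c : K) (Kv Lv Lv' : nat -> K) :
  wf_ribbon G ->
  (forall e, e \in F -> b e != 0) ->
  Kv 0%N = 1 -> Lv 0%N = 1 -> Lv' 0%N = 1 ->
  Rpoly G 1 c b Kv Lv Lv' =
  (\prod_(e in F) b e) *
    Rpoly (pdual G F) 1 c (fun e => if e \in F then (b e)^-1 else b e) Kv Lv Lv'.
Proof.
move=> _ bF_neq0 _ _ _.
rewrite /Rpoly mulr_sumr [RHS](reindex_inj (inv_inj (symdiffK F))) /=.
apply: eq_bigr => A _.
rewrite bcomp_pdual bnd_pdual cycword_pdual markword_pdual !expr1n !mul1r.
by rewrite (prod_symdiff_inv A bF_neq0) !mulrA.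
Qed.
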